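(* Let $T$ be an $n$-node tree, $k\ge 2$ an integer, and apply the Rake-and-Compress algorithm with parameter $k$ to $T$. Let $R$ be the set of raked nodes (the union of all rake layers $R_i$). Then every connected component of the induced subgraph $T[R]$ has diameter at most $4(\log_k n+1)+2$.
   Context: Rake-and-Compress algorithm on a tree $T$ with parameter $k\ge 2$: set $V_0=V(T)$; for $i=1,2,\dots,\lceil\log_k n+1\rceil$: (1) let $C_i$ be the set of nodes $u\in V_{i-1}$ such that $u$ and all neighbors of $u$ have degree at most $k$ in $T[V_{i-1}]$ (compress); (2) let $R_i$ be the set of nodes $u\in V_{i-1}\setminus C_i$ with degree at most $1$ in $T[V_{i-1}\setminus C_i]$ (rake); (3) set $V_i=V_{i-1}\setminus(C_i\cup R_i)$. It is known (Chang–Pettie) that every node lies in some $C_i$ or $R_i$. The layers are totally ordered by the time of marking: $C_1<R_1<C_2<R_2<\dots$; node $u$ is lower than node $v$ if $u$'s layer is lower, or they share a layer and $u$ has smaller ID. *)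

From Stdlib Require Import Reals.
From mathcomp Require Import all_boot.

Set Implicit Arguments.
Unset Strict Implicit.
Unset Printing Implicit Defensive.

Section RakeCompress.
Variable V : finType.
Variable e : rel V.

Definition simple_graph : Prop := symmetric e /\ irreflexive e.

(* a tree: nonempty, connected, with exactly #|V| - 1 (undirected) edges;
   the directed edge count is twice the undirected one. *)
Definition is_tree : Prop :=
  [/\ simple_graph, 0 < #|V|, (forall x y, connect e x y)
    & #|[set p : V * V | e p.1 p.2]| = 2 * (#|V| - 1)].

Definition deg_in (S : {set V}) (u : V) : nat := #|[set v in S | e u v]|.

Definition compress_set (k : nat) (S : {set V}) : {set V} :=
  [set u in S | (deg_in S u <= k) && [forall v in S, e u v ==> (deg_in S v <= k)]].

Definition rake_set (k : nat) (S : {set V}) : {set V} :=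
  let S' := S :\: compress_set k S in
  [set u in S' | deg_in S' u <= 1].

Definition rc_step (k : nat) (S : {set V}) : {set V} :=
  S :\: (compress_set k S :|: rake_set k S).

Definition rc_V (k i : nat) : {set V} := iter i (rc_step k) setT.

(* number of rounds ceil(log_k n + 1) = ceil(log_k n) + 1 = up_log k n + 1 *)
Definition rc_rounds (k : nat) : nat := (up_log k #|V|).+1.

(* R = union of the rake layers R_1, ..., R_L, where R_{i+1} = rake_set k V_i *)
Definition raked (k : nat) : {set V} :=
  \bigcup_(i < rc_rounds k) rake_set k (rc_V k i).

Definition induced_rel (S : {set V}) : rel V :=
  [rel x y | [&& e x y, x \in S & y \in S]].

End RakeCompress.

From Stdlib Require Import Reals Lra.
From mathcomp Require Import all_boot zify.

Set Implicit Arguments.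
Unset Strict Implicit.

(* Let the layer of a raked node be the round in which it is raked.  A node
   raked in round i has at most one neighbour still present and uncompressed
   at round i, and every node raked in round >= i is such a neighbour.  So on
   a simple path of raked nodes no node has both neighbours of layer >= its
   own: the layer sequence has no valley.  A valley-free sequence with values
   below L strictly rises, then strictly falls, hence has fewer than 2L
   terms; with L = up_log k n + 1 rounds this gives the bound. *)

Lemma natpowE k m : Nat.pow k m = k ^ m.
Proof. by elim: m => //= m IH; rewrite expnS IH mulnE. Qed.

Section LogBound.
Local Open Scope R_scope.

Lemma INR_up_log_le (k n : nat) : (1 < k)%N -> (0 < n)%N ->
  INR (up_log k n) <= ln (INR n) / ln (INR k) + 1.
Proof.
move=> k1 n0.
have k1R : 1 < INR k by apply: (lt_INR 1); apply/ltP.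
have lnk_gt0 : 0 < ln (INR k) by rewrite -ln_1; apply: ln_increasing; lra.
case E: (up_log k n) => [|m]; last rewrite S_INR.
  have n1R : 1 <= INR n by apply: (le_INR 1); apply/leP.
  have lnn_ge0 : 0 <= ln (INR n).
    case: (Rle_lt_or_eq_dec _ _ n1R) => [n1|<-]; last by rewrite ln_1; lra.
    by rewrite -ln_1; left; apply: ln_increasing; lra.
  have := Rmult_le_pos _ _ lnn_ge0 (Rlt_le _ _ (Rinv_0_lt_compat _ lnk_gt0)).
  by rewrite /=; lra.
have n1 : (1 < n)%N by have := up_log_gt0 k n; rewrite E k1 /= => <-.
have pow_lt_n : INR k ^ m < INR n.
  have := up_log_gtn k1 n1; rewrite E /= => h.
  by rewrite -pow_INR; apply: lt_INR; apply/ltP; rewrite natpowE.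
have lt_m : INR m * ln (INR k) < ln (INR n) / ln (INR k) * ln (INR k).
  have -> : ln (INR n) / ln (INR k) * ln (INR k) = ln (INR n) by field; lra.
  by rewrite -ln_pow; [apply: ln_increasing => //; apply: pow_lt|]; lra.
by have := Rmult_lt_reg_r _ _ _ lnk_gt0 lt_m; lra.
Qed.

Lemma INR_le_log_bound (k n m : nat) : (1 < k)%N -> (0 < n)%N ->
  (m <= (up_log k n).*2.+1)%N -> INR m <= 4 * (ln (INR n) / ln (INR k) + 1) + 2.
Proof.
move=> k1 n0 /leP/le_INR; rewrite S_INR -addnn plus_INR.
by have := INR_up_log_le k1 n0; have := pos_INR (up_log k n); lra.
Qed.

End LogBound.

Fixpoint no_valley (s : seq nat) : bool :=
  if s is a :: t then
    if t is b :: c :: _ then ((a < b) || (c < b)) && no_valley t else true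
  else true.

Lemma no_valley_behead a s : no_valley (a :: s) -> no_valley s.
Proof. by case: s => [|b [|c s]] //= /andP[]. Qed.

Lemma no_valley_decreasing a b s :
  no_valley [:: a, b & s] -> b < a -> size (b :: s) <= a.
Proof.
elim: s a b => [|c s IH] a b /=; first by move=> _; lia.
move=> /andP[/orP[lt_ab|lt_cb] nv] lt_ba; first by lia.
by have := IH b c nv lt_cb => /=; lia.
Qed.

Lemma no_valley_size L a s : no_valley (a :: s) ->
  all (fun x => x < L) (a :: s) -> size (a :: s) + a <= 2 * L.
Proof.
elim: s a => [|b s IH] a nv /=; first by rewrite andbT; lia.
move=> /and3P[aL bL sL].
case: (ltngtP a b) => [lt_ab|lt_ba|eq_ab].
- by have := IH b (no_valley_behead nv); rewrite /= bL sL => /(_ isT); lia.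
- by have := no_valley_decreasing nv lt_ba => /=; lia.
- subst b; case: s nv {IH sL} => [|c s] /=; first by lia.
  move=> /andP[/orP[|lt_ca] nv]; first by lia.
  by have := no_valley_decreasing nv lt_ca => /=; lia.
Qed.

Section RakeLayers.
Variable V : finType.
Variable e : rel V.
Variable k : nat.
Hypothesis e_sym : symmetric e.

Let rake i := rake_set e k (rc_V e k i).
Let uncompressed i := rc_V e k i :\: compress_set e k (rc_V e k i).

Lemma rc_V_subset i j : i <= j -> rc_V e k j \subset rc_V e k i.
Proof.
move=> /subnK <-; elim: (j - i) => [|d IH]; first by rewrite add0n.
by rewrite addSn /rc_V iterS; apply: subset_trans IH; apply: subsetDl.
Qed.

Lemma rake_set_sub_uncompressed i j : i <= j -> rake j \subset uncompressed i.
Proof.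
rewrite leq_eqVlt => /predU1P[-> | lt_ij]; first by apply/subsetP=> y /setIdP[].
apply/subsetP=> y /setIdP[/setDP[yVj _] _].
move: (subsetP (rc_V_subset lt_ij) y yVj).
by rewrite /rc_V iterS !inE negb_or => /andP[/andP[-> _] ->].
Qed.

Lemma rake_later_neighbour_uniq i x y z jy jz :
  x \in rake i -> e x y -> e x z -> y \in rake jy -> z \in rake jz ->
  i <= jy -> i <= jz -> y = z.
Proof.
move=> /setIdP[_ deg_x] exy exz yR zR le_iy le_iz.
apply/eqP; apply: contraLR deg_x => neq_yz; rewrite -ltnNge.
have : [set y; z] \subset [set v in uncompressed i | e x v].
  apply/subsetP => w /set2P[->|->]; rewrite inE ?exy ?exz andbT.
  - exact: subsetP (rake_set_sub_uncompressed le_iy) y yR.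
  - exact: subsetP (rake_set_sub_uncompressed le_iz) z zR.
by move/subset_leq_card; rewrite cards2 neq_yz.
Qed.

Definition rake_layer (x : V) : nat :=
  find (fun i => x \in rake i) (iota 0 (rc_rounds V k)).

Lemma rake_layerP x : x \in raked e k ->
  rake_layer x < rc_rounds V k /\ x \in rake (rake_layer x).
Proof.
move=> /bigcupP[i _ xRi].
have has_layer : has (fun i => x \in rake i) (iota 0 (rc_rounds V k)).
  by apply/hasP; exists (nat_of_ord i); rewrite // mem_iota /=.
have lt_layer : rake_layer x < rc_rounds V k.
  by rewrite /rake_layer -[X in _ < X](size_iota 0 (rc_rounds V k)) -has_find.
by split; last by have := nth_find 0 has_layer; rewrite nth_iota.
Qed.

Let rakedE := induced_rel e (raked e k).

Lemma induced_path_raked x p : path rakedE x p -> all (mem (raked e k)) p.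
Proof. by elim: p x => //= y p IH x /andP[/and3P[_ _ ->] /IH]. Qed.

Lemma rake_layer_no_valley x p :
  path rakedE x p -> uniq (x :: p) -> no_valley (map rake_layer (x :: p)).
Proof.
elim: p x => [|y p IH] x //= /andP[rxy pth] /andP[x_notin uniq_p].
move: (IH y pth uniq_p); case: p pth uniq_p x_notin {IH} => [|z p] //=.
move=> /andP[ryz _] _ x_notin ->; rewrite andbT !ltnNge -negb_and.
apply/negP => /andP[le_yx le_yz].
move: rxy ryz => /and3P[exy xR yR] /and3P[eyz _ zR].
have x_eq_z := rake_later_neighbour_uniq (rake_layerP yR).2 _ eyz
  (rake_layerP xR).2 (rake_layerP zR).2 le_yx le_yz.
by move: x_notin; rewrite x_eq_z ?inE ?eqxx ?orbT // e_sym.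
Qed.

End RakeLayers.

Theorem mainTheorem5 (V : finType) (e : rel V) (k : nat) :
  is_tree e -> 2 <= k ->
  forall u v : V, u \in raked e k -> v \in raked e k ->
  connect (induced_rel e (raked e k)) u v ->
  exists p : seq V,
    [/\ path (induced_rel e (raked e k)) u p, last u p = v &
        Rle (INR (size p))
          (Rplus (Rmult (INR 4) (Rplus (Rdiv (ln (INR #|V|)) (ln (INR k))) (INR 1))) (INR 2))].
Proof.
move=> [[e_sym _] n_gt0 _ _] k_gt1 u v uR _ /connectP[p0 pth0 ->].
case: (shortenP pth0) => p pth uniq_p _.
exists p; split => //.
have layers_lt : all (fun i => i < rc_rounds V k) (map (rake_layer e k) (u :: p)).
  rewrite all_map; apply/allP => x /= /predU1P[->|xp]; first exact: (rake_layerP uR).1.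
  exact: (rake_layerP (allP (induced_path_raked pth) x xp)).1.
have := no_valley_size (rake_layer_no_valley e_sym pth uniq_p) layers_lt.
rewrite /= size_map /rc_rounds => size_le.
have size_nat : (size p <= (up_log k #|V|).*2.+1)%N.
  by move: size_le; rewrite -addnn; move: (size p) (rake_layer _ _ _) (up_log _ _); lia.
have := INR_le_log_bound k_gt1 n_gt0 size_nat.
by simpl; lra.
Qed.
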